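(* There is a universal constant $C>0$ such that for every positive integer $T$, $x \in \{0,1\}^T$ and $p \in [0,1]^T$, there exist a set $S \subseteq [0,1]$ with $|S| \le C\sqrt{T}$ and distributions $\mathcal{D}_1,\ldots,\mathcal{D}_T$ supported on $S$ such that $\mathcal{D} = (\mathcal{D}_1,\ldots,\mathcal{D}_T) \in \underline{\mathcal{C}}(x)$ and $\|p - \mathcal{D}\|_1 \le \mathsf{LowerCalDist}(x,p) + C\sqrt{T}$.
   Context: Let $\underline{\mathcal{C}}(x)$ be the set of $T$-tuples $\mathcal{D} = (\mathcal{D}_1,\ldots,\mathcal{D}_T)$ of probability distributions, each with finite support contained in $[0,1]$, such that $\sum_{t=1}^T (x_t - \alpha)\mathcal{D}_t(\alpha) = 0$ for every $\alpha \in [0,1]$. For such $\mathcal{D}$, $\|p - \mathcal{D}\|_1 = \sum_{t=1}^T \mathbb{E}_{q_t \sim \mathcal{D}_t}|p_t - q_t|$, and $\mathsf{LowerCalDist}(x,p) = \inf_{\mathcal{D} \in \underline{\mathcal{C}}(x)} \|p - \mathcal{D}\|_1$. *)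

From HB Require Import structures.
From mathcomp Require Import all_boot all_order all_algebra.
From mathcomp Require Import boolp classical_sets functions cardinality fsbigop reals.
Set Implicit Arguments. Unset Strict Implicit. Unset Printing Implicit Defensive.
Import Order.TTheory GRing.Theory Num.Theory.
Local Open Scope classical_set_scope.
Local Open Scope ring_scope.

(* A probability distribution on R with finite support, represented by its
   probability mass function d : R -> R. *)
Definition fsupp (R : realType) (d : R -> R) : set R := [set a | d a != 0].

Definition is_fdist01 (R : realType) (d : R -> R) : Prop :=
  [/\ finite_set (fsupp d),
      (forall a, 0 <= d a),
      fsupp d `<=` `[0, 1]%classic
    & \sum_(a \in fsupp d) d a = 1].

Definition lowerCal (R : realType) (T : nat) (x : 'I_T -> R)
  (D : 'I_T -> R -> R) : Prop :=
  (forall t, is_fdist01 (D t)) /\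
  (forall a : R, a \in `[0, 1]%classic ->
       \sum_(t < T) (x t - a) * D t a = 0).

Definition l1dist (R : realType) (T : nat) (p : 'I_T -> R)
  (D : 'I_T -> R -> R) : R :=
  \sum_(t < T) \sum_(a \in fsupp (D t)) D t a * `|p t - a|.

Definition LowerCalDist (R : realType) (T : nat) (x p : 'I_T -> R) : R :=
  inf [set l1dist p D | D in lowerCal x].

From HB Require Import structures.
From mathcomp Require Import all_boot all_order all_algebra.
From mathcomp Require Import boolp classical_sets functions cardinality fsbigop reals.
From mathcomp Require Import lra.
From mathcomp Require finmap.
Set Implicit Arguments. Unset Strict Implicit. Unset Printing Implicit Defensive.
Import Order.TTheory GRing.Theory Num.Theory.
Local Open Scope classical_set_scope.
Local Open Scope ring_scope.

(* Take a lower-calibrated D within sqrt T of the infimum.  Split [0, 1] into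
   k ~ sqrt T cells of width 1/k and, in each cell, pool all the mass of D
   onto the single value at which that cell is calibrated, namely the
   D-weighted average of the outcomes x_t over the cell.  Calibration of D
   makes this average a convex combination of the values in the cell, so it
   stays in the cell: every value moves by at most 1/k, the l1 cost grows by
   at most T/k ~ sqrt T, and the pooled tuple is calibrated with support of
   size at most k. *)

Lemma fsum_fsupp_seq (R : realType) (d f : R -> R) (U : seq R) :
  uniq U -> (forall a, d a != 0 -> a \in U) -> (forall a, d a = 0 -> f a = 0) ->
  \sum_(a \in fsupp d) f a = \sum_(a <- U) f a.
Proof.
move=> uU sU f0; apply: fsbig_fwiden => // a [_ /=] na.
by apply: f0; apply: contra_notP na => /eqP.
Qed.

Lemma partition_big_seq (V : nmodType) (A : eqType) (J : finType)
    (s : seq A) (c : A -> J) (F : J -> A -> V) :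
  \sum_(j : J) \sum_(a <- s | c a == j) F j a = \sum_(a <- s) F (c a) a.
Proof.
under eq_bigr do rewrite big_mkcond.
rewrite exchange_big /=; apply: eq_bigr => a _.
by rewrite -big_mkcond (big_pred1 (c a)) // => j; rewrite eq_sym.
Qed.

Lemma l1dist_seq (R : realType) (T : nat) (p : 'I_T -> R) D (U : seq R) :
  uniq U -> (forall t a, D t a != 0 -> a \in U) ->
  l1dist p D = \sum_(t < T) \sum_(a <- U) D t a * `|p t - a|.
Proof.
move=> uU suppU; apply: eq_bigr => t _.
by apply: fsum_fsupp_seq => // [a|a ->]; [exact: suppU | rewrite mul0r].
Qed.

Section Pooling.
Variables (R : realType) (T : nat) (x : 'I_T -> R) (D : 'I_T -> R -> R).
Variable U : seq R.
Hypothesis D_ge0 : forall t a, 0 <= D t a.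
Hypothesis U_uniq : uniq U.
Hypothesis D_supp : forall t a, D t a != 0 -> a \in U.
Hypothesis U01 : forall a, a \in U -> 0 <= a <= 1.
Hypothesis sum_D : forall t, \sum_(a <- U) D t a = 1.
Hypothesis cal_D : forall a, a \in U -> \sum_(t < T) (x t - a) * D t a = 0.

Section Cells.
Variables (J : finType) (cell : R -> J).

Definition cell_mass t j := \sum_(a <- U | cell a == j) D t a.
Definition cell_weight j := \sum_(t < T) cell_mass t j.
Definition cell_outcomes j := \sum_(t < T) x t * cell_mass t j.
Definition pooled_value j := cell_outcomes j / cell_weight j.
Definition pooled_support := undup [seq pooled_value j | j <- enum J].
Definition pooled t c := \sum_(j | pooled_value j == c) cell_mass t j.

Lemma cell_mass_ge0 t j : 0 <= cell_mass t j.
Proof. exact: sumr_ge0. Qed.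

Lemma cell_weight_gt0 t a : a \in U -> 0 < D t a -> 0 < cell_weight (cell a).
Proof.
move=> aU Dpos; apply: lt_le_trans Dpos _.
apply: le_trans (_ : cell_mass t (cell a) <= _).
  by rewrite /cell_mass (big_rem a) //= eqxx lerDl sumr_ge0.
by rewrite /cell_weight (bigD1 t) //= lerDl sumr_ge0 // => u _; exact: cell_mass_ge0.
Qed.

Lemma cell_weightE j :
  cell_weight j = \sum_(a <- U | cell a == j) \sum_(t < T) D t a.
Proof. exact: exchange_big. Qed.

Lemma cell_outcomesE j :
  cell_outcomes j = \sum_(a <- U | cell a == j) a * \sum_(t < T) D t a.
Proof.
rewrite /cell_outcomes; under eq_bigr do rewrite mulr_sumr.
rewrite exchange_big /= big_seq_cond [RHS]big_seq_cond; apply: eq_bigr => a /andP[aU _].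
rewrite mulr_sumr; apply/eqP; rewrite -subr_eq0 -sumrB; apply/eqP.
by rewrite -[RHS](cal_D aU); apply: eq_bigr => t _; rewrite mulrBl.
Qed.

(* Calibration makes [pooled_value j] an average of the values of cell j. *)
Lemma pooled_value_between j lo hi :
  (forall a, a \in U -> cell a = j -> lo <= a <= hi) -> 0 < cell_weight j ->
  lo <= pooled_value j <= hi.
Proof.
move=> cell_j w_gt0.
rewrite ler_pdivlMr // ler_pdivrMr // cell_outcomesE cell_weightE.
rewrite !mulr_sumr; apply/andP; split;
  rewrite big_seq_cond [X in _ <= X]big_seq_cond; apply: ler_sum;
  move=> a /andP[aU /eqP/(cell_j a aU)/andP[lo_a a_hi]];
  by apply: ler_wpM2r => //; exact: sumr_ge0.
Qed.

Lemma pooled_value01 j : 0 <= pooled_value j <= 1.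
Proof.
have [w0|w_neq0] := eqVneq (cell_weight j) 0.
  by rewrite /pooled_value w0 invr0 mulr0 lexx ler01.
apply: pooled_value_between => [a aU _|]; first exact: U01.
by rewrite lt_def w_neq0 sumr_ge0 // => t _; exact: cell_mass_ge0.
Qed.

Lemma pooled_value_in j : pooled_value j \in pooled_support.
Proof. by rewrite mem_undup map_f ?mem_enum. Qed.

Lemma pooled_supp t c : pooled t c != 0 -> c \in pooled_support.
Proof.
apply: contraR => cS; rewrite /pooled big_pred0 // => j.
by apply/negbTE; apply: contraNneq cS => <-; exact: pooled_value_in.
Qed.

Lemma pooled_support01 c : c \in pooled_support -> 0 <= c <= 1.
Proof. by rewrite mem_undup => /mapP[j _ ->]; exact: pooled_value01. Qed.

Lemma size_pooled_support : (size pooled_support <= #|J|)%N.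
Proof. by rewrite (leq_trans (size_undup _)) // size_map -cardE. Qed.

Lemma sum_pooled_support (g : J -> R) :
  \sum_(c <- pooled_support) \sum_(j | pooled_value j == c) g j = \sum_j g j.
Proof.
under eq_bigr do rewrite big_mkcond.
rewrite exchange_big /=; apply: eq_bigr => j _.
rewrite (bigD1_seq (pooled_value j)) ?undup_uniq ?pooled_value_in //= eqxx.
by rewrite big1 ?addr0 // => c /negbTE; rewrite eq_sym => ->.
Qed.

Lemma pooled_ge0 t c : 0 <= pooled t c.
Proof. by apply: sumr_ge0 => j _; exact: cell_mass_ge0. Qed.

Lemma sum_pooled t : \sum_(c <- pooled_support) pooled t c = 1.
Proof.
by rewrite sum_pooled_support /cell_mass (partition_big_seq _ _ (fun _ => D t)).
Qed.

Lemma pooled_calibrated c : \sum_(t < T) (x t - c) * pooled t c = 0.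
Proof.
rewrite /pooled; under eq_bigr do rewrite mulr_sumr.
rewrite exchange_big /=; apply: big1 => j /eqP <-.
have -> : \sum_(t < T) (x t - pooled_value j) * cell_mass t j =
          cell_outcomes j - pooled_value j * cell_weight j.
  by rewrite mulr_sumr -sumrB; apply: eq_bigr => t _; rewrite mulrBl.
have [w0|w_neq0] := eqVneq (cell_weight j) 0; last by rewrite mulfVK ?subrr.
have mass0 := psumr_eq0P (fun t _ => cell_mass_ge0 t j) w0.
by rewrite w0 mulr0 subr0 /cell_outcomes big1 // => t _; rewrite mass0 ?mulr0.
Qed.

Lemma pooled_cost t q :
  \sum_(c <- pooled_support) pooled t c * `|q - c| <=
  \sum_(a <- U) D t a * (`|q - a| + `|a - pooled_value (cell a)|).
Proof.
have -> : \sum_(c <- pooled_support) pooled t c * `|q - c| =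
          \sum_(a <- U) D t a * `|q - pooled_value (cell a)|.
  rewrite -(partition_big_seq _ _ (fun j a => D t a * `|q - pooled_value j|)).
  rewrite -sum_pooled_support; apply: eq_bigr => c _.
  rewrite /pooled mulr_suml; apply: eq_bigr => j /eqP ->.
  by rewrite /cell_mass mulr_suml.
by apply: ler_sum => a _; rewrite ler_wpM2l ?ler_distD.
Qed.

End Cells.

Section Grid.
Variable n : nat.

Definition grid_cell (a : R) : 'I_n.+1 :=
  inord (minn (Num.truncn (a * n.+1%:R)) n).

Lemma grid_cellP a : 0 <= a <= 1 ->
  (grid_cell a)%:R <= a * n.+1%:R <= (grid_cell a)%:R + 1.
Proof.
move=> /andP[a0 a1]; have an0 : 0 <= a * n.+1%:R by rewrite mulr_ge0.
rewrite /grid_cell inordK; last by rewrite ltnS geq_minr.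
have /andP[k_le lt_k1] := truncn_itv an0.
case: (leqP (Num.truncn (a * n.+1%:R)) n) => [k_n|n_k].
  by rewrite k_le natr1 ltW.
have n_le : n%:R <= (Num.truncn (a * n.+1%:R))%:R :> R by rewrite ler_nat ltnW.
rewrite (le_trans n_le k_le) natr1 -[X in _ <= X]mul1r ler_wpM2r //.
Qed.

Lemma grid_deviation t a : a \in U -> D t a != 0 ->
  `|a - pooled_value grid_cell (grid_cell a)| <= n.+1%:R^-1.
Proof.
move=> aU Dneq0; set j := grid_cell a.
have n1_gt0 : 0 < n.+1%:R :> R by rewrite ltr0n.
have in_cell b : 0 <= b <= 1 -> grid_cell b = j ->
    j%:R / n.+1%:R <= b <= (j%:R + 1) / n.+1%:R.
  move=> b01 <-; rewrite ler_pdivlMr // ler_pdivrMr //.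
  exact: grid_cellP.
have w_gt0 : 0 < cell_weight grid_cell j.
  by apply: (@cell_weight_gt0 _ grid_cell t a aU); rewrite lt_def Dneq0 D_ge0.
have := pooled_value_between (fun b bU => in_cell b (U01 bU)) w_gt0.
have := in_cell a (U01 aU) erefl.
rewrite mulrDl mul1r; set lo := j%:R / _; set w := n.+1%:R^-1.
by move=> /andP[? ?] /andP[? ?]; rewrite ler_norml; apply/andP; split; lra.
Qed.

Lemma grid_pooled_cost t q :
  \sum_(c <- pooled_support grid_cell) pooled grid_cell t c * `|q - c| <=
  \sum_(a <- U) D t a * `|q - a| + n.+1%:R^-1.
Proof.
apply: le_trans (pooled_cost _ _ _) _.
have -> : n.+1%:R^-1 = \sum_(a <- U) D t a * n.+1%:R^-1 :> R.
  by rewrite -mulr_suml sum_D mul1r.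
rewrite -big_split /= big_seq [X in _ <= X]big_seq; apply: ler_sum => a aU.
rewrite mulrDr lerD2l; have [->|Dneq0] := eqVneq (D t a) 0; first by rewrite !mul0r.
by rewrite ler_wpM2l // (grid_deviation aU Dneq0).
Qed.

Lemma grid_pooled_lowerCal (p : 'I_T -> R) :
  let S := pooled_support grid_cell in
  [/\ uniq S /\ (forall c, c \in S -> 0 <= c <= 1),
      (size S <= n.+1)%N,
      (forall t c, pooled grid_cell t c != 0 -> c \in S),
      lowerCal x (pooled grid_cell)
    & l1dist p (pooled grid_cell) <= l1dist p D + T%:R / n.+1%:R].
Proof.
move=> S; have uS : uniq S by exact: undup_uniq.
have suppS := @pooled_supp _ grid_cell.
split=> //.
- by split=> // c; exact: pooled_support01.
- by rewrite (leq_trans (size_pooled_support _)) ?card_ord.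
- split=> [t|c _]; last exact: pooled_calibrated.
  split; [|exact: pooled_ge0| |].
  + by apply: sub_finite_set (finite_seq S) => c /= /suppS.
  + by move=> c /= /suppS /pooled_support01; rewrite /= in_itv.
  + by rewrite (fsum_fsupp_seq uS) ?sum_pooled //; exact: suppS.
- rewrite (l1dist_seq p uS suppS) (l1dist_seq p U_uniq D_supp).
  rewrite [T%:R / _]mulrC mulr_natr -[T in _ *+ T]card_ord -sumr_const -big_split.
  by apply: ler_sum => t _; exact: grid_pooled_cost.
Qed.

End Grid.
End Pooling.

Lemma fdist01_common_support (R : realType) (I : finType) (D : I -> R -> R) :
  (forall i, is_fdist01 (D i)) -> exists U : seq R, [/\ uniq U,
    forall i a, D i a != 0 -> a \in U & forall a, a \in U -> 0 <= a <= 1].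
Proof.
move=> fdistD; set A := \bigcup_(i in setT) fsupp (D i).
have finA : finite_set A.
  by apply: bigcup_finite => [|i _]; [exact: finite_finset | by case: (fdistD i)].
exists (finmap.enum_fset (fset_set A)); split; first exact: finmap.fset_uniq.
  by move=> i a Dia; rewrite in_fset_set // inE; exists i.
move=> a; rewrite in_fset_set // inE => -[i _ Dia].
by case: (fdistD i) => _ _ /(_ a Dia); rewrite /= in_itv.
Qed.

Lemma lowerCal_grid_rounding (R : realType) (T n : nat) (x p : 'I_T -> R) D :
  lowerCal x D ->
  exists (S : seq R) (D' : 'I_T -> R -> R),
    [/\ uniq S /\ (forall a, a \in S -> 0 <= a <= 1),
        (size S <= n.+1)%N,
        (forall t a, D' t a != 0 -> a \in S),
        lowerCal x D'
      & l1dist p D' <= l1dist p D + T%:R / n.+1%:R].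
Proof.
move=> [fdistD cal_D]; have [U [uU suppU U01]] := fdist01_common_support fdistD.
have D_ge0 t a : 0 <= D t a by case: (fdistD t).
have sum_D t : \sum_(a <- U) D t a = 1.
  by case: (fdistD t) => _ _ _ <-; apply/esym/fsum_fsupp_seq => // a; exact: suppU.
have cal_U a : a \in U -> \sum_(t < T) (x t - a) * D t a = 0.
  by move=> /U01 a01; apply: cal_D; rewrite inE /= in_itv.
exists (pooled_support x D U (grid_cell n)), (pooled x D U (grid_cell n)).
exact: grid_pooled_lowerCal.
Qed.

Lemma lowerCal_mean (R : realType) (T : nat) (x : 'I_T -> R) :
  (0 < T)%N -> (forall t, 0 <= x t <= 1) ->
  lowerCal x (fun _ a => if a == (\sum_(t < T) x t) / T%:R then 1 else 0).
Proof.
move=> T_gt0 x01; set mu := _ / _.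
have T_neq0 : T%:R != 0 :> R by rewrite pnatr_eq0 -lt0n.
have supp_mu : fsupp (fun a : R => if a == mu then 1 else 0) = [set mu].
  by apply/seteqP; split=> a; rewrite /fsupp /=; case: (a =P mu);
    rewrite ?eqxx ?oner_neq0.
have mu01 : 0 <= mu <= 1.
  rewrite divr_ge0 ?sumr_ge0 //=; last by move=> t _; case/andP: (x01 t).
  rewrite ler_pdivrMr ?ltr0n // mul1r -[X in _ <= X%:R]card_ord -sumr_const.
  by apply: ler_sum => t _; case/andP: (x01 t).
split=> [t|a _].
  split; rewrite ?supp_mu ?fsbig_set1 ?eqxx //.
  - by move=> a; case: ifP.
  - by move=> a ->; rewrite /= in_itv.
case: eqP => [->|_]; last by apply: big1 => t _; rewrite mulr0.
under eq_bigr do rewrite mulr1.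
by rewrite sumrB sumr_const card_ord -mulr_natr /mu divfK // subrr.
Qed.

Lemma l1dist_ge0 (R : realType) (T : nat) (x p : 'I_T -> R) D :
  lowerCal x D -> 0 <= l1dist p D.
Proof.
move=> [fdistD _]; apply: sumr_ge0 => t _; apply: fsumr_ge0 => a _.
by case: (fdistD t) => _ D_ge0 _ _; rewrite mulr_ge0.
Qed.

Lemma LowerCalDist_approx (R : realType) (T : nat) (x p : 'I_T -> R) (e : R) :
  (0 < T)%N -> (forall t, 0 <= x t <= 1) -> 0 < e ->
  exists2 D, lowerCal x D & l1dist p D < LowerCalDist x p + e.
Proof.
move=> T_gt0 x01 e_gt0.
have has_infE : has_inf [set l1dist p D | D in lowerCal x].
  have [D0 calD0] : exists D0, lowerCal x D0 by eexists; exact: lowerCal_mean.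
  split; first by exists (l1dist p D0), D0.
  by exists 0 => _ [D calD <-]; exact: l1dist_ge0 calD.
by have [_ [D calD <-]] := inf_adherent e_gt0 has_infE; exists D.
Qed.

Lemma grid_size_sqrt (R : realType) (T : nat) : (0 < T)%N ->
  exists n : nat, n.+1%:R <= Num.sqrt (T%:R : R) /\
                  T%:R / n.+1%:R <= 2 * Num.sqrt (T%:R : R).
Proof.
move=> T_gt0; set s := Num.sqrt _.
have s_ge1 : 1 <= s by rewrite -sqrtr1 ler_sqrt ?ler1n.
have := truncn_itv (le_trans ler01 s_ge1).
have : (0 < Num.truncn s)%N by rewrite truncn_gt0.
case: (Num.truncn s) => [//|n] _ /andP[n1_le_s s_lt]; exists n; split=> //.
have n1_ge1 : 1 <= n.+1%:R :> R by rewrite ler1n.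
rewrite -natr1 in s_lt.
rewrite ler_pdivrMr ?ltr0n // -[T%:R](sqr_sqrtr (ler0n _ T)) -/s expr2.
nra.
Qed.

Theorem lemma3 (R : realType) :
  exists C : R, 0 < C /\
  forall (T : nat), (0 < T)%N ->
  forall (x p : 'I_T -> R),
    (forall t, x t = 0 \/ x t = 1) ->
    (forall t, 0 <= p t <= 1) ->
    exists (S : seq R) (D : 'I_T -> R -> R),
      [/\ uniq S /\ (forall a, a \in S -> 0 <= a <= 1),
          (size S)%:R <= C * Num.sqrt (T%:R),
          (forall t a, D t a != 0 -> a \in S),
          lowerCal x D
        & l1dist p D <= LowerCalDist x p + C * Num.sqrt (T%:R)].
Proof.
(* The range of [p] is irrelevant: pooling moves each value by at most 1/k,
   whatever [p] is. *)
exists 3; split=> // T T_gt0 x p x_bin _.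
have [n [n1_le_s grid_le]] := grid_size_sqrt R T_gt0.
set s := Num.sqrt _ in n1_le_s grid_le *.
have x01 t : 0 <= x t <= 1 by case: (x_bin t) => ->; rewrite ?lexx ?ler01.
have s_gt0 : 0 < s by apply: lt_le_trans n1_le_s; rewrite ltr0n.
have [D calD D_near] := LowerCalDist_approx p T_gt0 x01 s_gt0.
have [S [D' [S01 size_S suppD' calD' costD']]] := lowerCal_grid_rounding n p calD.
exists S, D'; split=> //.
  have : (size S)%:R <= n.+1%:R :> R by rewrite ler_nat.
  lra.
set L := LowerCalDist _ _ in D_near *; set g := T%:R / _ in costD' grid_le.
lra.
Qed.
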